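(* Let $(Q,F)$ be a finite ice quiver with $Q_0=\{1,\dots,m\}$, $F_0=\{n+1,\dots,m\}$ and Euler matrix $\widehat B=(b_{ij})$, and let $1\le v\le n$ be an unfrozen vertex not incident to loops or $2$-cycles. Let $E_v=(e_{ij})$ be the $m\times m$ matrix with $e_{ij}=\delta_{ij}$ for $j\ne v$, $e_{iv}=[b_{iv}]_+$ for $i\neq v$, and $e_{vv}=-1$. Then the Euler matrix of the extended Fomin–Zelevinsky mutation $\mu^{\mathrm{FZ}}_v(Q,F)$ equals $E_v\widehat BE_v^T$.
   Context: $[x]_+=\max\{x,0\}$. The Euler matrix of a finite ice quiver $(Q,F)$ (with $F$ the frozen subquiver): $b_{ii}=0$ for $i\le n$, $b_{ii}=1$ for $i>n$, and $b_{ij}=\#\{\text{unfrozen arrows } i\to j\}-\#\{\text{arrows } j\to i\}$ for $i\neq j$. Extended Fomin–Zelevinsky mutation $\mu^{\mathrm{FZ}}_v(Q,F)$: (1) for each pair of arrows $\alpha:u\to v$, $\beta:v\to w$ add an unfrozen arrow $u\to w$; (2) reverse all arrows incident to $v$; (3) remove a maximal collection of $2$-cycles consisting of unfrozen arrows; (4) replace each $2$-cycle in a maximal collection of $2$-cycles with exactly one frozen arrow by a frozen arrow pointing in the direction of the unfrozen arrow of that $2$-cycle. *)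

From HB Require Import structures.
From mathcomp Require Import all_boot all_order all_algebra.
Set Implicit Arguments. Unset Strict Implicit. Unset Printing Implicit Defensive.
Import Order.TTheory GRing.Theory Num.Theory.
Local Open Scope ring_scope.

(* A finite ice quiver on the vertex set 'I_m (vertex i : 'I_m is the paper's
   vertex i+1), given up to isomorphism by its arrow multiplicities:
   [uarr Q i j] = number of unfrozen arrows i -> j,
   [farr Q i j] = number of frozen arrows (arrows of F) i -> j. *)
Record iceq (m : nat) := IceQ {
  uarr : 'I_m -> 'I_m -> nat;
  farr : 'I_m -> 'I_m -> nat }.

(* F is a subquiver with vertex set F_0 = {n+1,...,m}, i.e. the vertices
   i : 'I_m with n <= i : frozen arrows have both endpoints in F_0. *)
Definition frozen_ok (m n : nat) (Q : iceq m) : Prop :=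
  forall i j : 'I_m, (0 < farr Q i j)%N -> (n <= i)%N /\ (n <= j)%N.

Definition euler (m n : nat) (Q : iceq m) : 'M[int]_m :=
  \matrix_(i, j)
    (if i == j then ((n <= i)%N)%:Z
     else (uarr Q i j)%:Z - (uarr Q j i)%:Z - (farr Q j i)%:Z).

Definition pos_part (x : int) : int := Num.max x 0.

Definition Emat (m n : nat) (Q : iceq m) (v : 'I_m) : 'M[int]_m :=
  \matrix_(i, j)
    (if j == v then (if i == v then -1 else pos_part (euler n Q i v))
     else (i == j)%:Z).

(* (1) for each pair alpha : i -> v, beta : v -> j add an unfrozen arrow i -> j
   (arrows incident to the unfrozen vertex v are unfrozen). *)
Definition mut_step1 m (v : 'I_m) (Q : iceq m) : iceq m :=
  IceQ (fun i j => (uarr Q i j + uarr Q i v * uarr Q v j)%N) (farr Q).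
Definition mut_step2 m (v : 'I_m) (Q : iceq m) : iceq m :=
  IceQ (fun i j => if (i == v) || (j == v) then uarr Q j i else uarr Q i j)
       (fun i j => if (i == v) || (j == v) then farr Q j i else farr Q i j).
(* (3) remove a maximal collection of 2-cycles of unfrozen arrows. *)
Definition mut_step3 m (Q : iceq m) : iceq m :=
  IceQ (fun i j => if i == j then uarr Q i j
                   else (uarr Q i j - minn (uarr Q i j) (uarr Q j i))%N)
       (farr Q).
(* (4) number of 2-cycles (frozen i -> j, unfrozen j -> i) in a maximal
   collection of 2-cycles with exactly one frozen arrow; each is replaced by a
   frozen arrow j -> i. *)
Definition mut_pairs m (Q : iceq m) (i j : 'I_m) : nat :=
  if i == j then 0%N else minn (farr Q i j) (uarr Q j i).
Definition mut_step4 m (Q : iceq m) : iceq m :=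
  IceQ (fun i j => (uarr Q i j - mut_pairs Q j i)%N)
       (fun i j => (farr Q i j - mut_pairs Q i j + mut_pairs Q j i)%N).

Definition muFZ m (v : 'I_m) (Q : iceq m) : iceq m :=
  mut_step4 (mut_step3 (mut_step2 v (mut_step1 v Q))).

From HB Require Import structures.
From mathcomp Require Import all_boot all_order all_algebra zify ring.
Import GRing.Theory Num.Theory.
Set Implicit Arguments.
Unset Strict Implicit.
Local Open Scope ring_scope.

(* Steps (3) and (4) of the mutation only cancel 2-cycles or trade an unfrozen
   arrow for a frozen one in the same slot of the Euler matrix, so they leave it
   unchanged.  Steps (1) and (2) negate row and column v and add
   u_{iv} u_{vj} - u_{jv} u_{vi} elsewhere (u = uarr Q); since v lies on no 2-cycle,
   [b_{iv}]_+ = u_{iv}, and this is exactly the entry of E_v B E_v^T. *)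

Lemma pos_part_sub_nat (a b : nat) :
  (a = 0 \/ b = 0)%N -> pos_part (a%:Z - b%:Z) = a%:Z.
Proof. by rewrite /pos_part; case=> ->; lia. Qed.

Lemma euler_mut_step34 m n (Q : iceq m) :
  euler n (mut_step4 (mut_step3 Q)) = euler n Q.
Proof.
apply/matrixP => i j; rewrite !mxE; case: eqVneq => //= ij.
have ji : j != i by rewrite eq_sym.
by rewrite /mut_pairs /= !(negbTE ij) !(negbTE ji); lia.
Qed.

Lemma Emat_mul_row m n (Q : iceq m) (v i : 'I_m) (x : 'I_m -> int) :
  \sum_k Emat n Q v i k * x k =
  if i == v then - x v else x i + pos_part (euler n Q i v) * x v.
Proof.
rewrite (bigD1 v) //= mxE eqxx.
under eq_bigr => k kv do rewrite mxE (negbTE kv).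
case: eqP => [->|/eqP iv].
  by rewrite big1 ?addr0 ?mulN1r // => k kv; rewrite eq_sym (negbTE kv) mul0r.
rewrite (bigD1 i) //= eqxx mul1r big1 ?addr0 1?addrC // => k /andP[_ ki].
by rewrite eq_sym (negbTE ki) mul0r.
Qed.

Lemma Emat_conjE m n (Q : iceq m) (v : 'I_m) (M : 'M[int]_m) (i j : 'I_m) :
  M v v = 0 ->
  (Emat n Q v *m M *m (Emat n Q v)^T) i j =
  if i == v then (if j == v then 0 else - M v j)
  else if j == v then - M i v
  else M i j + pos_part (euler n Q i v) * M v j
             + pos_part (euler n Q j v) * M i v.
Proof.
move=> Mvv.
have EM k : (Emat n Q v *m M) i k =
    if i == v then - M v k else M i k + pos_part (euler n Q i v) * M v k.
  by rewrite mxE Emat_mul_row.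
rewrite mxE.
under eq_bigr => k _ do rewrite [(Emat n Q v)^T k j]mxE mulrC.
rewrite Emat_mul_row !EM Mvv.
by case: eqP => _; case: eqP => _; ring.
Qed.

Section UnfrozenVertex.

Variables (m n : nat) (Q : iceq m) (v : 'I_m).
Hypotheses (frozenQ : frozen_ok n Q) (v_unfrozen : (v < n)%N)
           (no_loop_v : uarr Q v v = 0%N).
Hypothesis no_2cycle_v : forall i : 'I_m, i != v ->
  (uarr Q i v + farr Q i v = 0)%N \/ (uarr Q v i + farr Q v i = 0)%N.

Local Notation B := (euler n Q).

Lemma farr_to_v k : farr Q k v = 0%N.
Proof using frozenQ v_unfrozen.
by case: (posnP (farr Q k v)) => // /frozenQ [_]; rewrite leqNgt v_unfrozen.
Qed.

Lemma farr_from_v k : farr Q v k = 0%N.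
Proof using frozenQ v_unfrozen.
by case: (posnP (farr Q v k)) => // /frozenQ []; rewrite leqNgt v_unfrozen.
Qed.

Lemma euler_vv : B v v = 0.
Proof using v_unfrozen. by rewrite mxE eqxx; case: leqP v_unfrozen. Qed.

Lemma euler_skew_v k : B v k = - B k v.
Proof using frozenQ v_unfrozen.
case: (eqVneq k v) => [->|kv]; first by rewrite euler_vv oppr0.
by rewrite !mxE eq_sym (negbTE kv) farr_to_v farr_from_v !subr0 opprB.
Qed.

Lemma euler_to_v k : k != v -> B k v = (uarr Q k v)%:Z - (uarr Q v k)%:Z.
Proof using frozenQ v_unfrozen.
by move=> kv; rewrite mxE (negbTE kv) farr_from_v subr0.
Qed.

Lemma pos_part_euler_v k : k != v -> pos_part (B k v) = (uarr Q k v)%:Z.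
Proof using frozenQ v_unfrozen no_2cycle_v.
move=> kv; rewrite euler_to_v // pos_part_sub_nat //.
by case: (no_2cycle_v kv) => /eqP; rewrite addn_eq0 => /andP[/eqP-> _];
  [left | right].
Qed.

Lemma euler_mut_step12 i j : i != j ->
  euler n (mut_step2 v (mut_step1 v Q)) i j =
  if (i == v) || (j == v) then - B i j
  else B i j + (uarr Q i v * uarr Q v j)%:Z - (uarr Q j v * uarr Q v i)%:Z.
Proof using frozenQ v_unfrozen no_loop_v.
move=> ij; rewrite !mxE /= (negbTE ij) orbC.
case: (eqVneq i v) => [->|iv]; case: (eqVneq j v) => [->|jv] //=;
  rewrite ?farr_to_v ?farr_from_v ?no_loop_v; lia.
Qed.

End UnfrozenVertex.

Theorem lemma4p2 (m n : nat) (Q : iceq m) (v : 'I_m) :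
  (n <= m)%N -> frozen_ok n Q ->
  (v < n)%N ->
  (* v is not incident to loops *)
  uarr Q v v = 0%N -> farr Q v v = 0%N ->
  (* v is not incident to 2-cycles *)
  (forall i : 'I_m, i != v ->
     (uarr Q i v + farr Q i v = 0)%N \/ (uarr Q v i + farr Q v i = 0)%N) ->
  euler n (muFZ v Q) = Emat n Q v *m euler n Q *m (Emat n Q v)^T.
Proof.
(* [farr Q v v = 0] already follows from [frozen_ok n Q] and [v < n]. *)
move=> _ frozenQ vn uvv _ no2cyc.
have Bskew := euler_skew_v frozenQ vn.
have c_of := pos_part_euler_v frozenQ vn no2cyc.
apply/matrixP => i j; rewrite Emat_conjE ?euler_vv // /muFZ euler_mut_step34.
case: (eqVneq i j) => [<-|ij].
  rewrite [LHS]mxE eqxx; case: (eqVneq i v) => [->|iv]; first by case: leqP vn.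
  by rewrite Bskew [euler n Q i i]mxE eqxx; ring.
rewrite euler_mut_step12 //; case: (eqVneq i v) ij => [-> vj|iv ij].
  by rewrite eq_sym (negbTE vj).
case: (eqVneq j v) => [->|jv] //=.
rewrite !c_of // Bskew !(euler_to_v frozenQ vn) //; lia.
Qed.
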